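(* Let $K$ be an oriented virtual knot diagram with a positive classical crossing $l$, and let $K'$ be the diagram obtained from $K$ by switching $l$ to a negative crossing. Then $\gamma(K)-\gamma(K')=\pm 2\,t^{\bar L(K_l)}$ and $\bar\gamma(K)-\bar\gamma(K')=0$.
   Context: For an oriented virtual knot diagram $K$ and a classical crossing $c$ with sign $sgn(c)\in\{\pm1\}$, let $K_c$ be the two-component oriented virtual link diagram obtained by smoothing $c$ in the orientation-respecting way. Let $L(K_c)$ be the sum of the signs of all classical crossings of $K_c$ at which the two strands belong to different components, and $\bar L(K_c)=L(K_c)\bmod 2\in\{0,1\}$. Define $\gamma(K)=\sum_{c} t^{\bar L(K_c)}\,sgn(c)$, summing over all classical crossings, an element of the free $\mathbb{Z}$-module on $\{1,t\}$, and $\bar\gamma(K)$ to be $\gamma(K)$ with coefficients reduced modulo $2$. *)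

(* Virtual knot diagrams are encoded by their Gauss diagrams. *)
From mathcomp Require Import all_boot all_order all_algebra.
Set Implicit Arguments. Unset Strict Implicit. Unset Printing Implicit Defensive.
Import GRing.Theory Num.Theory.
Local Open Scope ring_scope.

(* A Gauss diagram with n classical crossings labelled by 'I_n:
   - gd_word : the cyclic sequence of crossings met while traversing the
     knot (read linearly from a base point), each crossing met twice;
   - gd_over : for each position of gd_word, whether the strand passes
     over there;
   - gd_sign : the sign (+1 / -1) of each crossing. *)
Record gauss (n : nat) := Gauss {
  gd_word : seq 'I_n;
  gd_over : seq bool;
  gd_sign : 'I_n -> int }.

Definition gauss_wf n (K : gauss n) : bool :=
  [&& size (gd_over K) == size (gd_word K),
      all (fun c => count_mem c (gd_word K) == 2%N) (enum 'I_n),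
      all (fun c => count (fun x => (x.1 == c) && x.2)
                       (zip (gd_word K) (gd_over K)) == 1%N) (enum 'I_n)
    & all (fun c => (gd_sign K c == 1) || (gd_sign K c == -1)) (enum 'I_n)].

Definition pos1 n (K : gauss n) (c : 'I_n) : nat := index c (gd_word K).
Definition pos2 n (K : gauss n) (c : 'I_n) : nat :=
  (pos1 K c + 1 + index c (drop (pos1 K c).+1 (gd_word K)))%N.

(* the arc strictly between the two occurrences of c: after smoothing c
   (orientation-respecting), this arc is one component of K_c and the rest
   of the word is the other. *)
Definition arc n (K : gauss n) (c : 'I_n) : seq 'I_n :=
  take (pos2 K c - pos1 K c - 1) (drop (pos1 K c).+1 (gd_word K)).

(* crossing d of K_c has its two strands on different components *)
Definition intercomp n (K : gauss n) (c d : 'I_n) : bool :=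
  (d != c) && odd (count_mem d (arc K c)).

Definition Lsm n (K : gauss n) (c : 'I_n) : int :=
  \sum_(d < n | intercomp K c d) gd_sign K d.

Definition Lbar n (K : gauss n) (c : 'I_n) : nat := odd `|Lsm K c|%N.

Definition gamma n (K : gauss n) : {poly int} :=
  \sum_(c < n) (gd_sign K c)%:P * 'X^(Lbar K c).

Definition gammabar n (K : gauss n) : {poly 'F_2} :=
  map_poly (fun z : int => z%:~R : 'F_2) (gamma K).

Definition switch n (K : gauss n) (l : 'I_n) : gauss n :=
  Gauss (gd_word K)
        [seq if x.1 == l then ~~ x.2 else x.2 | x <- zip (gd_word K) (gd_over K)]
        (fun c => if c == l then - gd_sign K c else gd_sign K c).

(* Switching l only negates the sign of l; the Gauss word, hence every arc and
   every intercomponent relation, is unchanged.  So for each smoothing K_c the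
   linking number L(K_c) moves by 0 or by 2 sgn(l), leaving its parity intact,
   and the only term of gamma that changes is the one of l itself, from
   sgn(l) t^(Lbar K_l) to -sgn(l) t^(Lbar K_l).  The difference 2 sgn(l) t^(..)
   vanishes modulo 2. *)
From mathcomp Require Import all_boot all_order all_algebra.
From mathcomp Require Import ring.
Import GRing.Theory Num.Theory.
Local Open Scope ring_scope.

Lemma odd_abs_subr_even (x y : int) : (2 %| y)%Z -> odd `|x - y|%N = odd `|x|%N.
Proof.
move=> y_even; apply: negb_inj; rewrite -!dvdn2.
exact: (rpredBr x y_even).
Qed.

Section Switch.

Variables (n : nat) (K : gauss n) (l : 'I_n).

Lemma intercomp_switch c d : intercomp (switch K l) c d = intercomp K c d.
Proof. by []. Qed.

Lemma gd_sign_switch d :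
  gd_sign (switch K l) d = if d == l then - gd_sign K d else gd_sign K d.
Proof. by []. Qed.

Lemma Lsm_switch c :
  Lsm (switch K l) c = Lsm K c - (intercomp K c l)%:R * 2 * gd_sign K l.
Proof.
rewrite /Lsm; under eq_bigl do rewrite intercomp_switch.
have other_signs : \sum_(d < n | intercomp K c d && (d != l)) gd_sign (switch K l) d
                 = \sum_(d < n | intercomp K c d && (d != l)) gd_sign K d.
  by apply: eq_bigr => d /andP[_ /negbTE d_neq_l]; rewrite gd_sign_switch d_neq_l.
case: (boolP (intercomp K c l)) => l_inter; last first.
  rewrite mulr0n !mul0r subr0; apply: eq_bigr => d d_inter.
  by rewrite gd_sign_switch; case: eqP => // d_eq_l; rewrite -d_eq_l d_inter in l_inter.
rewrite (bigD1 l) // [in RHS](bigD1 l) // other_signs gd_sign_switch eqxx.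
rewrite mul1r [RHS]addrAC; congr (_ + _); ring.
Qed.

Lemma Lbar_switch c : Lbar (switch K l) c = Lbar K c.
Proof.
rewrite /Lbar Lsm_switch odd_abs_subr_even //.
exact/dvdz_mulr/dvdz_mull/dvdzz.
Qed.

Lemma gamma_switch :
  gamma K - gamma (switch K l) = (gd_sign K l * 2)%:P * 'X^(Lbar K l).
Proof.
rewrite /gamma -sumrB (bigD1 l) // big1 ?addr0; last first.
  by move=> d /negbTE d_neq_l; rewrite Lbar_switch gd_sign_switch d_neq_l subrr.
rewrite Lbar_switch gd_sign_switch eqxx -mulrBl -polyCB opprK /= addr0.
congr (_%:P * _); ring.
Qed.

Lemma gammabar_switch : gammabar K - gammabar (switch K l) = 0.
Proof.
apply/polyP => i; rewrite coefB coef0 /gammabar !coef_map_id0 ?mulr0z //.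
rewrite -mulrzBr -coefB gamma_switch coefCM coefXn.
case: (i == _); rewrite ?mulr0 // mulr1.
have two_eq0 : (2%:~R : 'F_2) = 0 by apply/eqP.
by rewrite intrM two_eq0 mulr0.
Qed.

End Switch.

Theorem mainTheorem4 (n : nat) (K : gauss n) (l : 'I_n) :
  gauss_wf K -> gd_sign K l = 1 ->
  (exists e : int, (e = 1 \/ e = -1) /\
     gamma K - gamma (switch K l) = (e * 2)%:P * 'X^(Lbar K l))
  /\ gammabar K - gammabar (switch K l) = 0.
Proof.
move=> _ l_pos; split; last exact: gammabar_switch.
by exists (gd_sign K l); split; [left | exact: gamma_switch].
Qed.
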